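(* Every $K_4$-free disk graph is $11$-degenerate.
   Context: A disk graph is the intersection graph of a finite set of closed disks in $\mathbb{R}^2$. A graph is $K_4$-free if it contains no complete subgraph on $4$ vertices. A graph is $c$-degenerate if its vertices can be ordered $v_1,\dots,v_n$ so that each $v_i$ has at most $c$ neighbours among $v_1,\dots,v_{i-1}$. *)

From Stdlib Require Import Reals.
From mathcomp Require Import all_boot.
Set Implicit Arguments. Unset Strict Implicit. Unset Printing Implicit Defensive.

Local Open Scope R_scope.

Record disk := Disk { dcenter : (R * R)%type ; dradius : R }.

Definition in_disk (D : disk) (p : (R * R)%type) : Prop :=
  (fst p - fst (dcenter D))^2 + (snd p - snd (dcenter D))^2 <= (dradius D)^2.

Definition disks_intersect (D E : disk) : Prop :=
  exists p : (R * R)%type, in_disk D p /\ in_disk E p.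

Definition simple_graph (V : finType) (adj : V -> V -> Prop) : Prop :=
  (forall u v, adj u v -> adj v u) /\ (forall v, ~ adj v v).

Definition is_disk_graph (V : finType) (adj : V -> V -> Prop) : Prop :=
  exists D : V -> disk,
    injective D /\
    (forall v, 0 < dradius (D v)) /\
    (forall u v, adj u v <-> (u <> v /\ disks_intersect (D u) (D v))).

Definition K4_free (V : finType) (adj : V -> V -> Prop) : Prop :=
  ~ exists a b c d : V,
      (a <> b /\ a <> c /\ a <> d /\ b <> c /\ b <> d /\ c <> d) /\
      (adj a b /\ adj a c /\ adj a d /\ adj b c /\ adj b d /\ adj c d).

(* c-degenerate: there is an ordering v_1,...,v_n of all vertices (a
   duplicate-free sequence listing every vertex) such that each vertex has
   at most c neighbours among the vertices preceding it. *)
Definition degenerate (c : nat) (V : finType) (adj : V -> V -> Prop) : Prop :=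
  exists s : seq V,
    uniq s /\ (forall v : V, v \in s) /\
    forall (s1 s2 : seq V) (v : V), s = s1 ++ v :: s2 ->
      forall S : seq V, uniq S ->
        (forall u, u \in S -> u \in s1 /\ adj u v) ->
        (size S <= c)%N.

From Stdlib Require Import Reals Lra Psatz.
From mathcomp Require Import all_boot.
Set Implicit Arguments. Unset Strict Implicit.

(* Order the vertices by non-increasing radius.  Fix a vertex v of radius r and its
   earlier neighbours u, whose radii are at least r.  Each D_u contains a disk of radius r
   whose centre p_u lies within 2r of the centre of D_v.  If p_u and p_w lie in a common
   closed 60-degree sector around the centre of D_v then |p_u - p_w| <= 2r, so these two
   small disks meet and u, w are adjacent.  Cut the plane into six such sectors, with the
   ray separating sectors 0 and 5 passing through p_u0 for some earlier neighbour u0.  By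
   K4-freeness every sector holds at most two earlier neighbours, and sector 5, all of whose
   members are also adjacent to u0, at most one: at most 2 * 5 + 1 = 11 in total. *)

Lemma size_eq_sum_count (T : eqType) (k : T -> nat) (n : nat) (s : seq T) :
  {in s, forall x, k x < n} -> size s = \sum_(j < n) count (fun x => k x == j) s.
Proof.
elim: s => [|x s IH] k_lt /=; first by rewrite big1.
rewrite big_split /= -IH => [|y ys]; last by apply: k_lt; rewrite inE ys orbT.
rewrite (bigD1 (Ordinal (k_lt x (mem_head x s)))) //= eqxx big1 // => j.
by rewrite -val_eqE /= eq_sym => /negPf ->.
Qed.

Lemma K4_free_clique_in_nbrs (V : finType) (adj : V -> V -> Prop) (v : V) (s : seq V) :
  K4_free adj -> (forall u, ~ adj u u) -> uniq s ->
  {in s, forall u, adj u v} -> {in s &, forall x y, x != y -> adj x y} ->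
  size s <= 2.
Proof.
move=> K4 irr uniq_s to_v clique.
case: s uniq_s to_v clique => [|x [|y [|z s]]] //=.
rewrite !inE !negb_or => /and4P [/and3P [xy xz _] /andP [yz _] _ _] to_v clique.
have nv w : w \in [:: x, y, z & s] -> w <> v.
  by move=> ws wv; apply: (irr w); rewrite {2}wv; apply: to_v.
case: K4; exists x, y, z, v.
split; first by do !split; try exact/eqP; apply: nv; rewrite !inE eqxx ?orbT.
by do !split; (apply: to_v || apply: clique); rewrite ?inE ?eqxx ?orbT.
Qed.

Lemma degenerate_of_total_preorder (V : finType) (adj : V -> V -> Prop) (c : nat) (le : rel V) :
  total le -> transitive le ->
  (forall v (S : seq V), uniq S -> (forall u, u \in S -> adj u v /\ le u v) -> size S <= c) ->
  degenerate c adj.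
Proof.
move=> le_total le_trans bound; exists (sort le (enum V)); split; [|split].
- by rewrite sort_uniq enum_uniq.
- by move=> v; rewrite mem_sort mem_enum.
move=> s1 s2 v s_def S uniq_S S_earlier; apply: (bound v) => // u uS.
have [u_s1 adj_uv] := S_earlier u uS; split=> //.
have := sort_sorted le_total (enum V).
rewrite (sorted_pairwise le_trans) s_def pairwise_cat => /andP [/allrelP le_s1 _].
exact: le_s1 (mem_head v s2).
Qed.

Local Open Scope R_scope.

Definition vsub (p q : R * R) : R * R := (fst p - fst q, snd p - snd q).

Definition sqnorm (p : R * R) : R := fst p ^ 2 + snd p ^ 2.

Lemma sqnorm_ge0 p : 0 <= sqnorm p.
Proof. rewrite /sqnorm; nra. Qed.

Lemma sqnorm_vsub_diag p : sqnorm (vsub p p) = 0.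
Proof. rewrite /sqnorm /=; ring. Qed.

Lemma vsub_shift p q c : vsub (vsub p c) (vsub q c) = vsub p q.
Proof. by rewrite /vsub /=; f_equal; ring. Qed.

Lemma sqnorm_vsubC p q : sqnorm (vsub p q) = sqnorm (vsub q p).
Proof. rewrite /sqnorm /=; ring. Qed.

Lemma sum_squares_add_le x1 y1 x2 y2 A B : 0 <= A -> 0 <= B ->
  x1 ^ 2 + y1 ^ 2 <= A ^ 2 -> x2 ^ 2 + y2 ^ 2 <= B ^ 2 ->
  (x1 + x2) ^ 2 + (y1 + y2) ^ 2 <= (A + B) ^ 2.
Proof.
move=> A_ge0 B_ge0 n1 n2.
have sq_ge0 := pow2_ge_0.
have cauchy_schwarz : (x1 * x2 + y1 * y2) ^ 2 <= (A * B) ^ 2.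
  apply: (Rle_trans _ ((x1 ^ 2 + y1 ^ 2) * (x2 ^ 2 + y2 ^ 2))).
    have -> : (x1 ^ 2 + y1 ^ 2) * (x2 ^ 2 + y2 ^ 2)
              = (x1 * x2 + y1 * y2) ^ 2 + (x1 * y2 - y1 * x2) ^ 2 by ring.
    have := sq_ge0 (x1 * y2 - y1 * x2); lra.
  rewrite Rpow_mult_distr; apply: Rmult_le_compat => //.
    by have := sq_ge0 x1; have := sq_ge0 y1; lra.
  by have := sq_ge0 x2; have := sq_ge0 y2; lra.
have {}cauchy_schwarz : x1 * x2 + y1 * y2 <= A * B.
  by apply: Rsqr_incr_0_var; rewrite ?Rsqr_pow2 //; exact: Rmult_le_pos.
have -> : (x1 + x2) ^ 2 + (y1 + y2) ^ 2
          = (x1 ^ 2 + y1 ^ 2) + (x2 ^ 2 + y2 ^ 2) + 2 * (x1 * x2 + y1 * y2) by ring.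
have -> : (A + B) ^ 2 = A ^ 2 + B ^ 2 + 2 * (A * B) by ring.
lra.
Qed.

Lemma sqnorm_vsub_triangle p q z A B : 0 <= A -> 0 <= B ->
  sqnorm (vsub p q) <= A ^ 2 -> sqnorm (vsub q z) <= B ^ 2 ->
  sqnorm (vsub p z) <= (A + B) ^ 2.
Proof.
move=> A_ge0 B_ge0 pq qz.
have -> : vsub p z = ((fst p - fst q) + (fst q - fst z), (snd p - snd q) + (snd q - snd z)).
  by rewrite /vsub; f_equal; ring.
exact: sum_squares_add_le.
Qed.

Lemma disks_intersect_iff D E : 0 < dradius D -> 0 < dradius E ->
  disks_intersect D E <->
  sqnorm (vsub (dcenter D) (dcenter E)) <= (dradius D + dradius E) ^ 2.
Proof.
move: D E => [c r] [c' r'] /= r_gt0 r'_gt0; split.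
  move=> [z [zD zE]].
  apply: (sqnorm_vsub_triangle (q := z)); try lra; last exact: zE.
  by rewrite sqnorm_vsubC.
move=> d_le; pose t := r / (r + r').
have scale_le s : s ^ 2 * sqnorm (vsub c c') <= (s * (r + r')) ^ 2.
  by rewrite Rpow_mult_distr; apply: Rmult_le_compat_l => //; exact: pow2_ge_0.
exists (fst c + t * (fst c' - fst c), snd c + t * (snd c' - snd c)); split.
  have -> : r = t * (r + r') by rewrite /t; field; lra.
  by apply: Rle_trans (scale_le t); rewrite /sqnorm /= -/t; lra.
have -> : r' = (1 - t) * (r + r') by rewrite /t; field; lra.
by apply: Rle_trans (scale_le (1 - t)); rewrite /sqnorm /=; lra.
Qed.

Lemma disks_intersect_sym D E : disks_intersect D E -> disks_intersect E D.
Proof. by move=> [z [zD zE]]; exists z. Qed.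

(* The point at distance min(|c_u - c_v|, 2 r_v) from c_v towards c_u: the disk of
   radius r_v around it lies inside D_u. *)
Definition inner_center (Dv Du : disk) : R * R :=
  let c := dcenter Dv in
  let d := vsub (dcenter Du) c in
  if Rle_dec (sqnorm d) ((2 * dradius Dv) ^ 2) then dcenter Du
  else let t := 2 * dradius Dv / sqrt (sqnorm d) in
       (fst c + t * fst d, snd c + t * snd d).

Lemma inner_center_spec Dv Du :
  0 < dradius Dv <= dradius Du -> disks_intersect Dv Du ->
  sqnorm (vsub (inner_center Dv Du) (dcenter Dv)) <= (2 * dradius Dv) ^ 2 /\
  sqnorm (vsub (inner_center Dv Du) (dcenter Du)) <= (dradius Du - dradius Dv) ^ 2.
Proof.
move=> r_bounds meet.
have : sqnorm (vsub (dcenter Du) (dcenter Dv)) <= (dradius Du + dradius Dv) ^ 2.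
  by apply/disks_intersect_iff; [lra | lra | exact: disks_intersect_sym].
rewrite /inner_center; move: r_bounds.
set c := dcenter Dv; set c' := dcenter Du; set r := dradius Dv; set R' := dradius Du.
set d := vsub c' c => -[r_gt0 r_le] d_le.
case: Rle_dec => [d_small | d_large]; cbn [is_left].
  by split; [exact: d_small | rewrite sqnorm_vsub_diag; exact: pow2_ge_0].
move/Rnot_le_lt: d_large => d_large.
have dd := sqnorm_ge0 d; set delta := sqrt (sqnorm d).
have delta_sq : sqnorm d = delta ^ 2 by rewrite /delta /= Rmult_1_r sqrt_sqrt.
have delta_ge0 : 0 <= delta by exact: sqrt_pos.
have delta_gt : 2 * r < delta by rewrite delta_sq in d_large; nra.
have delta_le : delta <= R' + r by rewrite delta_sq in d_le; nra.
split.
  rewrite [sqnorm _](_ : _ = (2 * r / delta * delta) ^ 2).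
    by rewrite (_ : 2 * r / delta * delta = 2 * r) //; [lra | field; lra].
  by rewrite Rpow_mult_distr -delta_sq /sqnorm /vsub /d /=; ring.
rewrite [sqnorm _](_ : _ = ((1 - 2 * r / delta) * delta) ^ 2).
  rewrite (_ : (1 - 2 * r / delta) * delta = delta - 2 * r); last by field; lra.
  by apply: pow_incr; lra.
by rewrite Rpow_mult_distr -delta_sq /sqnorm /vsub /d /=; ring.
Qed.

Lemma disks_intersect_of_inner_disks Du Dw p q r :
  0 < r -> r <= dradius Du -> r <= dradius Dw ->
  sqnorm (vsub p (dcenter Du)) <= (dradius Du - r) ^ 2 ->
  sqnorm (vsub q (dcenter Dw)) <= (dradius Dw - r) ^ 2 ->
  sqnorm (vsub p q) <= (2 * r) ^ 2 -> disks_intersect Du Dw.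
Proof.
move=> r_gt0 r_le_u r_le_w pu qw pq.
apply/disks_intersect_iff; try lra.
rewrite (_ : dradius Du + dradius Dw = dradius Du - r + 2 * r + (dradius Dw - r)); last ring.
apply: (sqnorm_vsub_triangle (q := q)); [lra | lra | | exact: qw].
apply: (sqnorm_vsub_triangle (q := p)); [lra | lra | | exact: pq].
by rewrite sqnorm_vsubC.
Qed.

Definition hex_form (p : R * R) : R := fst p ^ 2 + fst p * snd p + snd p ^ 2.

(* With theta the angle from e to a, these are |e||a| sin(pi/3 - theta) and |e||a| sin theta:
   both are nonnegative exactly on the closed sector 0 <= theta <= pi/3, and [hex_form] of
   them is proportional to |a|^2. *)
Definition hex_coords (e a : R * R) : R * R :=
  let cross := fst e * snd a - snd e * fst a in
  (sqrt 3 / 2 * (fst e * fst a + snd e * snd a) - cross / 2, cross).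

Lemma hex_form_coords e a : hex_form (hex_coords e a) = 3 / 4 * sqnorm e * sqnorm a.
Proof.
have sqrt3_sq : sqrt 3 * sqrt 3 = 3 by apply: sqrt_sqrt; lra.
rewrite /hex_form /hex_coords /sqnorm; move: e a => [e1 e2] [a1 a2]; cbn [fst snd].
set dot := e1 * a1 + e2 * a2; set cross := e1 * a2 - e2 * a1.
transitivity (sqrt 3 * sqrt 3 * dot ^ 2 / 4 + 3 / 4 * cross ^ 2); first by field.
by rewrite sqrt3_sq /dot /cross; field.
Qed.

Lemma hex_coords_vsub e a b : hex_coords e (vsub a b) = vsub (hex_coords e a) (hex_coords e b).
Proof. by rewrite /hex_coords /vsub /=; f_equal; field. Qed.

Lemma hex_form_sub_le p q :
  0 <= fst p -> 0 <= snd p -> 0 <= fst q -> 0 <= snd q ->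
  hex_form (vsub p q) <= Rmax (hex_form p) (hex_form q).
Proof.
rewrite /hex_form /vsub; move: p q => [s t] [s' t']; cbn [fst snd] => s_ge0 t_ge0 s'_ge0 t'_ge0.
set N := s ^ 2 + s * t + t ^ 2; set N' := s' ^ 2 + s' * t' + t' ^ 2.
set X := 2 * s * s' + 2 * t * t' + s * t' + t * s'.
have -> : (s - s') ^ 2 + (s - s') * (t - t') + (t - t') ^ 2 = N + N' - X.
  by rewrite /N /N' /X; ring.
have X_ge0 : 0 <= X by rewrite /X; nra.
have N_ge0 : 0 <= N by rewrite /N; nra.
have N'_ge0 : 0 <= N' by rewrite /N'; nra.
(* The law of cosines with an angle of at most 60 degrees: X is at least sqrt (N N'). *)
have X_sq_ge : N * N' <= X ^ 2.
  have -> : X ^ 2 = N * N' + 3 * (s * s' + t * t' + t * s') * (s * s' + t * t' + s * t').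
    by rewrite /N /N' /X; ring.
  have : 0 <= (s * s' + t * t' + t * s') * (s * s' + t * t' + s * t') by apply: Rmult_le_pos; nra.
  lra.
have [N_le | N'_lt] := Rle_or_lt N N'.
  apply: Rle_trans (Rmax_r N N'); nra.
apply: Rle_trans (Rmax_l N N'); nra.
Qed.

(* A rotation by a sixth of a turn in hexagonal coordinates, so [in_sector k] ranges over
   six closed 60-degree sectors. *)
Definition hex_rot (p : R * R) : R * R := (fst p + snd p, - fst p).

Lemma hex_form_iter_rot k p : hex_form (iter k hex_rot p) = hex_form p.
Proof. by elim: k => //= k <-; rewrite /hex_form /=; ring. Qed.

Lemma iter_hex_rot_vsub k p q :
  iter k hex_rot (vsub p q) = vsub (iter k hex_rot p) (iter k hex_rot q).
Proof. by elim: k => //= k ->; rewrite /hex_rot /vsub /=; f_equal; ring. Qed.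

Definition in_sector (k : nat) (p : R * R) : Prop :=
  0 <= fst (iter k hex_rot p) /\ 0 <= snd (iter k hex_rot p).

Lemma in_sector_sub_le k p q : in_sector k p -> in_sector k q ->
  hex_form (vsub p q) <= Rmax (hex_form p) (hex_form q).
Proof.
move=> [p1 p2] [q1 q2].
rewrite -(hex_form_iter_rot k p) -(hex_form_iter_rot k q) -(hex_form_iter_rot k (vsub p q)).
by rewrite iter_hex_rot_vsub; exact: hex_form_sub_le p1 p2 q1 q2.
Qed.

Definition sector (p : R * R) : nat :=
  let (x, y) := p in
  if Rle_dec 0 x then
    if Rle_dec 0 y then 0%N else if Rle_dec 0 (x + y) then 5%N else 4%N
  else
    if Rle_dec y 0 then 3%N else if Rle_dec 0 (x + y) then 1%N else 2%N.

Lemma sector_lt6 p : (sector p < 6)%N.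
Proof. by case: p => x y; rewrite /sector; do !case: Rle_dec. Qed.

Lemma in_sector_sector p : in_sector (sector p) p.
Proof. by case: p => x y; rewrite /sector /in_sector; do !case: Rle_dec => /= ?; lra. Qed.

Lemma sqnorm_vsub_le_of_sector e a b k : 0 < sqnorm e ->
  in_sector k (hex_coords e a) -> in_sector k (hex_coords e b) ->
  sqnorm (vsub a b) <= Rmax (sqnorm a) (sqnorm b).
Proof.
move=> e_gt0 ak bk; have c_gt0 : 0 < 3 / 4 * sqnorm e by lra.
apply: (Rmult_le_reg_l _ _ _ c_gt0); rewrite -RmaxRmult; last lra.
rewrite -!hex_form_coords hex_coords_vsub; exact: in_sector_sub_le ak bk.
Qed.

Lemma exists_sector_direction a :
  exists e, 0 < sqnorm e /\ sector (hex_coords e a) = 0%N /\ in_sector 5 (hex_coords e a).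
Proof.
have on_ray x : 0 <= x -> sector (x, 0) = 0%N /\ in_sector 5 (x, 0).
  move=> x_ge0; split; last by rewrite /in_sector /=; lra.
  by rewrite /sector; do ![case: Rle_dec => ? //=]; lra.
have [a_gt0 | a_le0] := Rlt_or_le 0 (sqnorm a).
  exists a; split=> //.
  rewrite (_ : hex_coords a a = (sqrt 3 / 2 * sqnorm a, 0)); last first.
    by rewrite /hex_coords /sqnorm /=; f_equal; field.
  by apply: on_ray; apply: Rmult_le_pos; [have := sqrt_pos 3 | ]; lra.
exists (1, 0); split; first by rewrite /sqnorm /=; lra.
have a_eq0 : a = (0, 0).
  move: a a_le0 => [a1 a2]; rewrite /sqnorm /= => a_le0.
  by f_equal; nra.
rewrite a_eq0 (_ : hex_coords (1, 0) (0, 0) = (0, 0)); last by rewrite /hex_coords /=; f_equal; field.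
by apply: on_ray; lra.
Qed.

Section EarlierNeighbours.

Variables (V : finType) (adj : V -> V -> Prop) (D : V -> disk).
Hypothesis radius_gt0 : forall v, 0 < dradius (D v).
Hypothesis adjE : forall u v, adj u v <-> u <> v /\ disks_intersect (D u) (D v).
Hypothesis K4 : K4_free adj.
Variable v : V.

Let r := dradius (D v).
Let offset u := vsub (inner_center (D v) (D u)) (dcenter (D v)).

Lemma adj_of_same_sector e k x y : 0 < sqnorm e -> x <> y ->
  adj x v -> r <= dradius (D x) -> adj y v -> r <= dradius (D y) ->
  in_sector k (hex_coords e (offset x)) -> in_sector k (hex_coords e (offset y)) ->
  adj x y.
Proof.
move=> e_gt0 xy /adjE [_ /disks_intersect_sym xv] rx /adjE [_ /disks_intersect_sym yv] ry xk yk.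
have r_gt0 : 0 < r := radius_gt0 v.
have [near_x in_x] := inner_center_spec (conj r_gt0 rx) xv.
have [near_y in_y] := inner_center_spec (conj r_gt0 ry) yv.
apply/adjE; split=> //; apply: (disks_intersect_of_inner_disks r_gt0 rx ry in_x in_y).
rewrite -(vsub_shift _ _ (dcenter (D v))).
apply: Rle_trans (sqnorm_vsub_le_of_sector e_gt0 xk yk) _.
exact: Rmax_lub near_x near_y.
Qed.

Lemma earlier_nbrs_size_le (S : seq V) : uniq S ->
  (forall u, u \in S -> adj u v /\ r <= dradius (D u)) -> (size S <= 11)%N.
Proof.
move=> uniq_S S_nbrs.
have [-> // | [u0 u0S]] : S = [::] \/ exists u0, u0 \in S.
  by case: S {uniq_S S_nbrs} => [|u s]; [left | right; exists u; exact: mem_head].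
have [e [e_gt0 [sector_u0 u0_in5]]] := exists_sector_direction (offset u0).
pose sector_of u := sector (hex_coords e (offset u)).
have clique_of k (s : seq V) : {subset s <= S} ->
    {in s, forall u, in_sector k (hex_coords e (offset u))} ->
    {in s &, forall x y, x != y -> adj x y}.
  move=> sS s_k x y xs ys /eqP xy.
  have [xv rx] := S_nbrs x (sS x xs); have [yv ry] := S_nbrs y (sS y ys).
  exact: (adj_of_same_sector e_gt0 xy xv rx yv ry (s_k x xs) (s_k y ys)).
have adj_v s : {subset s <= S} -> {in s, forall u, adj u v}.
  by move=> sS u us; have [] := S_nbrs u (sS u us).
have irr u : ~ adj u u by move/adjE=> [].
have class_le k : (count (fun u => sector_of u == k) S <= 2)%N.
  have sub_S : {subset filter (fun u => sector_of u == k) S <= S}.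
    by move=> u; rewrite mem_filter => /andP [].
  rewrite -size_filter; apply: (K4_free_clique_in_nbrs K4 irr).
  - exact: filter_uniq.
  - exact: adj_v sub_S.
  apply: (clique_of k _ sub_S) => u; rewrite mem_filter => /andP [/eqP <- _].
  exact: in_sector_sector.
(* u0 lies on the ray shared by sectors 0 and 5, hence is adjacent to all of sector 5. *)
have class5_le : (count (fun u => sector_of u == 5%N) S <= 1)%N.
  set S5 := filter (fun u => sector_of u == 5%N) S.
  have sub_S : {subset u0 :: S5 <= S}.
    by move=> u; rewrite inE mem_filter => /orP [/eqP -> | /andP []].
  suff : (size (u0 :: S5) <= 2)%N by rewrite /= /S5 size_filter.
  apply: (K4_free_clique_in_nbrs K4 irr).
  - by rewrite /= filter_uniq // andbT mem_filter /sector_of sector_u0.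
  - exact: adj_v sub_S.
  apply: (clique_of 5%N _ sub_S) => u; rewrite inE mem_filter => /orP [/eqP -> // | /andP [/eqP <- _]].
  exact: in_sector_sector.
rewrite (size_eq_sum_count (k := sector_of) (n := 6)) => [|u _]; last exact: sector_lt6.
rewrite big_ord_recr /=; apply: (leq_add (n1 := 10)) => //.
apply: (leq_trans (n := \sum_(i < 5) 2)); first exact: leq_sum.
by rewrite sum_nat_const card_ord.
Qed.

End EarlierNeighbours.

Theorem lemma6 (V : finType) (adj : V -> V -> Prop) :
  is_disk_graph adj -> K4_free adj -> degenerate 11 adj.
Proof.
move=> [D [_ [radius_gt0 adjE]]] K4.
pose by_radius u w : bool := Rle_dec (dradius (D w)) (dradius (D u)).
apply: (degenerate_of_total_preorder (le := by_radius)).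
- by move=> x y; rewrite /by_radius; do 2!case: Rle_dec => //=; lra.
- by move=> y x z; rewrite /by_radius; do 3!case: Rle_dec => //=; lra.
move=> w S uniq_S S_earlier.
apply: (earlier_nbrs_size_le radius_gt0 adjE K4 (v := w) uniq_S) => u uS.
have [adj_uw] := S_earlier u uS; rewrite /by_radius.
by case: Rle_dec.
Qed.
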